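(* Let $M$ be a subgroup of $\mathrm{GL}_n(\mathbb{C})$ and let $\Gamma \subset Z(M)$ be a subgroup of the center of $M$ isomorphic to $\mathbb{Z}$, such that $H = M/\Gamma$ is finite. Let $\mathcal{A}$ be an abelian subgroup of $H$ of the smallest index among abelian subgroups of $H$. Then there exists a finite subgroup $H' \subset \mathrm{GL}_n(\mathbb{C})$ such that $[H : \mathcal{A}] = [H' : \mathcal{A}']$, where $\mathcal{A}'$ is an abelian subgroup of $H'$ of the smallest index among abelian subgroups of $H'$.
   Context: $Z(M)$ denotes the center of $M$, and $[A:B]$ the index of a subgroup $B$ in a group $A$. *)

From HB Require Import structures.
From mathcomp Require Import all_boot all_order all_algebra all_fingroup.
From mathcomp Require Import reals.
From mathcomp Require Import complex.
Set Implicit Arguments. Unset Strict Implicit. Unset Printing Implicit Defensive.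
Import GRing.Theory.
Local Open Scope ring_scope.

Definition mx_subgroup (C : comUnitRingType) (n : nat) (M : 'M[C]_n -> Prop) :=
  [/\ M 1%:M,
      forall x, M x -> x \in unitmx,
      forall x y, M x -> M y -> M (x *m y)
    & forall x, M x -> M (invmx x)].

Definition central_subgroup (C : comUnitRingType) (n : nat)
    (Gam M : 'M[C]_n -> Prop) :=
  [/\ mx_subgroup Gam,
      forall x, Gam x -> M x
    & forall x y, Gam x -> M y -> x *m y = y *m x].

Definition iso_to_Z (C : comUnitRingType) (n : nat) (Gam : 'M[C]_n -> Prop) :=
  exists phi : int -> 'M[C]_n,
    [/\ forall a b : int, phi (a + b) = phi a *m phi b,
        injective phi
      & forall x, Gam x <-> exists k : int, x = phi k].

(* f restricted to M is a surjective homomorphism M -> H with kernel Gam,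
   i.e. H is (isomorphic to) the quotient M / Gam. *)
Definition quotient_map (C : comUnitRingType) (n : nat) (gT : finGroupType)
    (M Gam : 'M[C]_n -> Prop) (H : {group gT}) (f : 'M[C]_n -> gT) :=
  [/\ forall x y, M x -> M y -> f (x *m y) = (f x * f y)%g,
      forall h, h \in H <-> exists2 x, M x & f x = h
    & forall x, M x -> (f x = 1%g <-> Gam x)].

Definition min_index_abelian (gT : finGroupType) (A G : {group gT}) :=
  [/\ A \subset G, abelian A &
      forall B : {group gT}, B \subset G -> abelian B ->
        (#|G : A|%g <= #|G : B|%g)%N].

(* rho is an injective homomorphism of H' into GL_n(C), so that its image
   rho(H') is a finite subgroup of GL_n(C) isomorphic to H'. *)
Definition faithful_mxrep (C : comUnitRingType) (n : nat) (gT : finGroupType)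
    (H : {group gT}) (rho : gT -> 'M[C]_n) :=
  [/\ {in H &, forall x y, rho (x * y)%g = rho x *m rho y},
      {in H &, injective rho}
    & {in H, forall x, rho x \in unitmx}].

From HB Require Import structures.
From mathcomp Require Import all_boot all_order all_algebra all_fingroup all_solvable.
From mathcomp Require Import mxrepresentation reals complex ring.
From Stdlib Require Import ClassicalEpsilon.
Set Implicit Arguments. Unset Strict Implicit. Unset Printing Implicit Defensive.
Import GRing.Theory Num.Theory.
Local Open Scope ring_scope.

(* Let gam generate Gamma and k = #|H|. The matrix gam is invertible, so it has
   a k-th root s that is a polynomial in gam (Hensel lifting and the Chinese
   remainder theorem give a k-th root of 'X modulo the characteristic
   polynomial); in particular s commutes with M. A set-theoretic section lift
   of M -> H defines an integer 2-cocycle c, with lift g * lift h =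
   gam ^ c(g,h) * lift (g h), and summing the cocycle identity over H shows
   that k c is the coboundary of transfer h = \sum_g c(g,h). Hence
   h |-> lift h * s ^ (-transfer h) is a representation rho of H whose kernel
   K lifts to powers of s. If a commutator [x, y] lies in K, its lift
   C = [X, Y] is a power of s, so it commutes with X = lift x, and X C = X ^ Y
   gives X^k C^k = (X^k)^Y = X^k because X^k lies in the central group Gamma;
   as gam has infinite order, C = 1. So K is central and abelian subgroups of
   H / K lift to abelian subgroups of H containing K: the faithful
   representation of H / K induced by rho has the same minimal index of an
   abelian subgroup as H. *)

Lemma exprD_mod_sqr (R : comPzRingType) (x y : R) m :
  exists r, (x + y) ^+ m = x ^+ m + m%:R * x ^+ m.-1 * y + r * y ^+ 2.
Proof.
elim: m => [|m [r Er]]; first by exists 0; rewrite !mul0r !addr0.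
exists (m%:R * x ^+ m.-1 + r * (x + y)); rewrite exprS Er.
by case: m {Er} => [|m]; rewrite /= ?expr0 !exprS; ring.
Qed.

Section KthRootOfX.
Variables (F : closedFieldType) (k : nat).
Hypothesis k_neq0 : k%:R != 0 :> F.

Definition kth_root_X_mod (P : {poly F}) := exists q : {poly F}, P %| q ^+ k - 'X.

Lemma kth_root_X_mod_XsubC_exp (l : F) e :
  l != 0 -> kth_root_X_mod (('X - l%:P) ^+ e.+1).
Proof.
have k_gt0 : (0 < k)%N by rewrite lt0n; apply: contraNneq k_neq0 => ->.
move=> l_neq0; elim: e => [|e [q /dvdpP [u q_def]]].
  have /closed_rootP [x rx] : size ('X^k - l%:P) != 1.
    by rewrite size_XnsubC // eqSS -lt0n.
  exists x%:P; rewrite expr1 dvdp_XsubCl /root !hornerE.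
  by move: rx; rewrite /root !hornerE.
have ql : q.[l] ^+ k = l.
  apply/eqP; rewrite -subr_eq0; have /eqP := congr1 (horner^~ l) q_def.
  by rewrite !hornerE subrr expr0n mulr0.
have ql_neq0 : q.[l] != 0.
  by apply: contraNneq l_neq0 => ql0; rewrite -ql ql0 expr0n eqn0Ngt k_gt0.
have D_neq0 : k%:R * q.[l] ^+ k.-1 != 0 by rewrite mulf_neq0 ?expf_neq0.
(* Newton step: t is chosen so that v below vanishes at l. *)
pose t := - u.[l] / (k%:R * q.[l] ^+ k.-1).
have Dt : k%:R * q.[l] ^+ k.-1 * t = - u.[l] by rewrite mulrC divfK.
pose w := t%:P * ('X - l%:P) ^+ e.+1.
pose v := u + k%:R * q ^+ k.-1 * t%:P.
have rv : root v l.
  by rewrite /root /v hornerD !hornerM hornerMn hornerC horner_exp hornerC Dt subrr.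
have [r Er] := exprD_mod_sqr q w k.
exists (q + w); rewrite Er.
have -> : q ^+ k + k%:R * q ^+ k.-1 * w + r * w ^+ 2 - 'X
    = v * ('X - l%:P) ^+ e.+1 + r * t%:P ^+ 2 * ('X - l%:P) ^+ (e.+1 * 2).
  by rewrite exprM -[q ^+ k](subrK 'X) q_def /v /w; ring.
apply: dvdp_add; first by rewrite exprS dvdp_mul // dvdp_XsubCl.
by rewrite dvdp_mull // dvdp_exp2l // mulnS muln1 addSn ltnS leq_addl.
Qed.

Lemma kth_root_X_modM (P Q : {poly F}) : coprimep P Q ->
  kth_root_X_mod P -> kth_root_X_mod Q -> kth_root_X_mod (P * Q).
Proof.
move=> coPQ [p dvd_p] [q dvd_q].
have /Bezout_coprimepP [[u v] /= /eqpP [[c1 c2] /= /andP [c1_neq0 c2_neq0] Ec]] := coPQ.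
pose a := (c2^-1 * c1) *: (u * P); pose b := (c2^-1 * c1) *: (v * Q).
have ab1 : a + b = 1 by rewrite -scalerDr -scalerA Ec scalerA mulVf // scale1r.
have dvd_a : P %| a by rewrite dvdpZr ?mulf_neq0 ?invr_eq0 // dvdp_mull.
have dvd_b : Q %| b by rewrite dvdpZr ?mulf_neq0 ?invr_eq0 // dvdp_mull.
exists (p * b + q * a); rewrite Gauss_dvdp //; apply/andP; split.
  rewrite -(subrK (p ^+ k) (_ ^+ k)) -addrA dvdp_add // subrXX dvdp_mulr //.
  by rewrite -[p in _ - p]mulr1 -ab1 (_ : _ - _ = (q - p) * a) ?dvdp_mull //; ring.
rewrite -(subrK (q ^+ k) (_ ^+ k)) -addrA dvdp_add // subrXX dvdp_mulr //.
by rewrite -[q in _ - q]mulr1 -ab1 (_ : _ - _ = (p - q) * b) ?dvdp_mull //; ring.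
Qed.

Lemma kth_root_X_mod_nroot0 (P : {poly F}) : ~~ root P 0 -> kth_root_X_mod P.
Proof.
have [N] := ubnP (size P); elim: N P => // N IH P sizeP P0.
have P_neq0 : P != 0 by apply: contraNneq P0 => ->; rewrite root0.
have [/closed_rootP [l rl] | /negPn sizeP1] := boolP (size P != 1).
  have [m [Q /implyP /(_ P_neq0) Ql P_def]] := multiplicity_XsubC P l.
  have l_neq0 : l != 0 by apply: contraNneq P0 => <-.
  have Q_neq0 : Q != 0 by apply: contraNneq P_neq0 => Q0; rewrite P_def Q0 mul0r.
  case: m P_def => [|m] P_def; first by move: rl; rewrite P_def expr0 mulr1 (negbTE Ql).
  have sizeQ : (size Q < size P)%N.
    rewrite P_def size_mul ?expf_neq0 ?polyXsubC_eq0 // size_exp_XsubC.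
    by rewrite addnS /= -{1}[size Q]addn0 ltn_add2l.
  rewrite P_def; apply: kth_root_X_modM.
  - by rewrite coprimep_expr // coprimep_XsubC.
  - apply: IH; first exact: leq_trans sizeQ sizeP.
    by apply: contra P0; rewrite P_def rootM => ->.
  - exact: kth_root_X_mod_XsubC_exp.
have [c c_neq0 ->] : exists2 c, c != 0 & P = c%:P.
  exists P`_0; last exact: size1_polyC (eq_leq (eqP sizeP1)).
  by rewrite -horner_coef0.
by exists 0; rewrite (@eqp_dvdl _ 1) ?dvd1p ?polyC_eqp1.
Qed.

Lemma unitmx_kth_root_horner n (g : 'M[F]_n.+1) :
  g \in unitmx -> exists p : {poly F}, horner_mx g p ^+ k = g.
Proof.
move=> g_unit; have [|q /dvdpP [r Er]] := @kth_root_X_mod_nroot0 (char_poly g).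
  rewrite /root horner_coef0 char_poly_det mulf_eq0 negb_or signr_eq0.
  by rewrite -unitfE -unitmxE.
exists q; rewrite -rmorphXn -(subrK 'X (q ^+ k)) Er rmorphD rmorphM /=.
by rewrite Cayley_Hamilton mulr0 add0r horner_mx_X.
Qed.

End KthRootOfX.

Lemma conj_mulr_expr1 (Rg : unitRingType) (X Y C : Rg) m :
  X \is a GRing.unit -> Y \is a GRing.unit ->
  GRing.comm X C -> GRing.comm (X ^+ m) Y -> X * C = Y^-1 * X * Y -> C ^+ m = 1.
Proof.
move=> X_unit Y_unit cXC cXmY XC_def.
have conjX i : (Y^-1 * X * Y) ^+ i = Y^-1 * X ^+ i * Y.
  elim: i => [|i IHi]; first by rewrite !expr0 mulr1 mulVr.
  by rewrite exprS IHi !mulrA mulrK // exprS !mulrA.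
apply: (mulrI (unitrX m X_unit)); rewrite -exprMn_comm // XC_def conjX.
by rewrite -mulrA cXmY mulrA mulVr // mul1r mulr1.
Qed.

Lemma morph_int_exprz (Rg : unitRingType) (phi : int -> Rg) :
  {morph phi : a b / a + b >-> a * b} -> (forall z, phi z \is a GRing.unit) ->
  forall z, phi z = phi 1 ^ z.
Proof.
move=> phiD phi_unit; have phi0 : phi 0 = 1.
  by apply: (mulrI (phi_unit 0)); rewrite -phiD addr0 mulr1.
have phi_nat m : phi m%:Z = phi 1 ^+ m.
  by elim: m => [|m IHm]; rewrite ?phi0 // -addn1 PoszD phiD IHm exprD.
case=> m; first exact: phi_nat.
apply: (mulrI (phi_unit m.+1%:Z)); rewrite -phiD NegzE addrN phi0 phi_nat.
by rewrite /= mulrV // unitrX // -[phi 1]expr1 -phi_nat.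
Qed.

Section CentralCyclicExtension.
Variables (Rg : unitRingType) (M : Rg -> Prop).
Variables (gT : finGroupType) (H : {group gT}) (f : Rg -> gT) (s : Rg).
Local Notation k := #|H|.
Local Notation gam := (s ^+ k).

Hypothesis M1 : M 1.
Hypothesis M_unit : forall x, M x -> x \is a GRing.unit.
Hypothesis MM : forall x y, M x -> M y -> M (x * y).
Hypothesis MV : forall x, M x -> M x^-1.
Hypothesis s_unit : s \is a GRing.unit.
Hypothesis s_cent : forall x, M x -> GRing.comm s x.
Hypothesis gam_inj : injective (fun z : int => gam ^ z).
Hypothesis fM : forall x y, M x -> M y -> f (x * y) = (f x * f y)%g.
Hypothesis f_onto : forall h, h \in H -> exists2 x, M x & f x = h.
Hypothesis f_ker : forall x, M x -> f x = 1%g -> exists z, x = gam ^ z.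

Let f1 : f 1 = 1%g.
Proof. by apply: (mulgI (f 1)); rewrite -fM // mulr1 mulg1. Qed.

Let fV x : M x -> f x^-1 = (f x)^-1%g.
Proof.
move=> Mx; have := fM Mx (MV Mx); rewrite (divrr (M_unit Mx)) f1.
by move/esym/eqP; rewrite -eq_invg_mul eq_sym => /eqP.
Qed.

Let M_exp x m : M x -> M (x ^+ m).
Proof. by move=> Mx; elim: m => [|m IHm]; rewrite ?expr0 // exprS; apply: MM. Qed.

Let fX x m : M x -> f (x ^+ m) = (f x ^+ m)%g.
Proof.
move=> Mx; elim: m => [|m IHm]; first by rewrite expr0 f1.
by rewrite exprS (fM Mx (M_exp m Mx)) IHm expgS.
Qed.

Let s_centXz z x : M x -> GRing.comm (s ^ z) x.
Proof. by move=> Mx; apply/commr_sym/commrXz/commr_sym/s_cent. Qed.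

Let gamXz z : gam ^ z = s ^ (z *+ k).
Proof. by rewrite exprnP exprz_exp -mulr_natr natz mulrC. Qed.

Definition lift h : Rg := epsilon (inhabits 1) (fun x => M x /\ f x = h).

Lemma liftP h : h \in H -> M (lift h) /\ f (lift h) = h.
Proof.
move=> /f_onto [x Mx fx].
by apply: (epsilon_spec (inhabits 1) (fun x => M x /\ f x = h)); exists x.
Qed.

Lemma lift_M h : h \in H -> M (lift h). Proof. by case/liftP. Qed.
Lemma liftK h : h \in H -> f (lift h) = h. Proof. by case/liftP. Qed.

Definition cocycle g h : int :=
  epsilon (inhabits 0) (fun z => lift g * lift h = gam ^ z * lift (g * h)).

Lemma cocycleP g h : g \in H -> h \in H ->
  lift g * lift h = gam ^ cocycle g h * lift (g * h).
Proof.
move=> Hg Hh; have Hgh := groupM Hg Hh.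
apply: (epsilon_spec (inhabits 0) (fun z => lift g * lift h = gam ^ z * lift (g * h))).
have M_gh := MM (lift_M Hg) (lift_M Hh).
have M_ghV := MV (lift_M Hgh).
have [|z Ez] := f_ker (MM M_gh M_ghV).
  by rewrite (fM M_gh M_ghV) (fV (lift_M Hgh)) (fM (lift_M Hg) (lift_M Hh)) !liftK ?mulgV.
by exists z; rewrite -Ez (divrK (M_unit (lift_M Hgh))).
Qed.

Lemma cocycle_identity g h l : g \in H -> h \in H -> l \in H ->
  cocycle g h + cocycle (g * h) l = cocycle h l + cocycle g (h * l).
Proof.
move=> Hg Hh Hl; have Hghl : (g * h * l)%g \in H by rewrite !groupM.
apply: gam_inj; apply: (mulIr (M_unit (lift_M Hghl))) => /=.
rewrite !exprzDr ?unitrX // -!mulrA -(cocycleP (groupM Hg Hh) Hl) mulrA.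
rewrite -(cocycleP Hg Hh) -mulgA -(cocycleP Hg (groupM Hh Hl)) mulrA gamXz.
by rewrite (s_centXz _ (lift_M Hg)) -gamXz -mulrA (cocycleP Hh Hl) mulrA.
Qed.

Definition transfer h : int := \sum_(g in H) cocycle g h.

Lemma transferM h1 h2 : h1 \in H -> h2 \in H ->
  transfer h1 + transfer h2 = cocycle h1 h2 *+ k + transfer (h1 * h2).
Proof.
move=> H1 H2; rewrite /transfer.
have -> : \sum_(g in H) cocycle g h2 = \sum_(g in H) cocycle (g * h1) h2.
  by rewrite (reindex_inj (mulIg h1)); apply: eq_bigl => g; rewrite /= groupMr.
rewrite -big_split -sumr_const -big_split /=.
by apply: eq_bigr => g Hg; rewrite cocycle_identity.
Qed.

Definition rho h := lift h * s ^ (- transfer h).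

Lemma rho_unit h : h \in H -> rho h \is a GRing.unit.
Proof. by move=> Hh; rewrite unitrMr ?unitrXz //; exact: M_unit (lift_M Hh). Qed.

Lemma rhoM : {in H &, {morph rho : x y / (x * y)%g >-> x * y}}.
Proof.
move=> x y Hx Hy; rewrite /rho.
have -> : - transfer (x * y) = cocycle x y *+ k + (- transfer x + - transfer y).
  by rewrite -opprD transferM // opprD addrA subrr add0r.
rewrite exprzDr // mulrA -(s_centXz _ (lift_M (groupM Hx Hy))) -gamXz.
rewrite -(cocycleP Hx Hy) exprzDr // -!mulrA; congr (_ * _); rewrite !mulrA.
by rewrite (s_centXz _ (lift_M Hy)).
Qed.

Lemma rho1 : rho 1%g = 1.
Proof.
by apply: (mulrI (rho_unit (group1 H))); rewrite -rhoM ?group1 // mulg1 mulr1.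
Qed.

Lemma lift_ker_rho h : rho h = 1 -> lift h = s ^ transfer h.
Proof.
move=> /(congr1 ( *%R^~ (s ^ transfer h))).
by rewrite /rho -mulrA -exprzDr // addNr expr0z mulr1 mul1r.
Qed.

Lemma M_ker_rho_expz m : M m -> f m \in H -> rho (f m) = 1 -> exists t, m = s ^ t.
Proof.
move=> Mm Hfm /lift_ker_rho lift_fm.
have M_liftV := MV (lift_M Hfm).
have [|a Ea] := f_ker (MM Mm M_liftV).
  by rewrite (fM Mm M_liftV) (fV (lift_M Hfm)) liftK ?mulgV.
exists (a *+ k + transfer (f m)).
by rewrite exprzDr // -gamXz -lift_fm -Ea (divrK (M_unit (lift_M Hfm))).
Qed.

Lemma commg_ker_rho x y : x \in H -> y \in H ->
  rho [~ x, y]%g = 1 -> [~ x, y]%g = 1%g.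
Proof.
move=> Hx Hy rho_xy1.
set X := lift x; set Y := lift y; have M_X := lift_M Hx; have M_Y := lift_M Hy.
pose C := X^-1 * (Y^-1 * (X * Y)).
have MC : M C by apply: MM (MV M_X) (MM (MV M_Y) (MM M_X M_Y)).
have fC : f C = [~ x, y]%g.
  by rewrite (fM (MV M_X) (MM (MV M_Y) (MM M_X M_Y))) (fM (MV M_Y) (MM M_X M_Y))
    (fM M_X M_Y) (fV M_X) (fV M_Y) !liftK.
have [t Ct] : exists t, C = s ^ t by apply: M_ker_rho_expz; rewrite ?fC ?groupR.
have [a Ea] : exists a, X ^+ k = gam ^ a.
  by apply: f_ker (M_exp _ M_X) _; rewrite fX // liftK // expg_cardG.
have Ck1 : C ^+ k = 1.
  apply: (conj_mulr_expr1 (M_unit M_X) (M_unit M_Y)).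
  - by rewrite /GRing.comm Ct s_centXz.
  - by rewrite /GRing.comm Ea gamXz s_centXz.
  - by rewrite /C mulrA (divrr (M_unit M_X)) mul1r !mulrA.
have t0 : t = 0.
  by apply: gam_inj; rewrite /= exprnP exprzAC -exprnP -Ct Ck1 expr0z.
by rewrite -fC Ct t0 expr0z f1.
Qed.

Lemma exists_rep_ker_commg1 : exists rho : gT -> Rg,
  [/\ rho 1%g = 1, {in H &, {morph rho : x y / (x * y)%g >-> x * y}}
    & {in H &, forall x y, rho [~ x, y]%g = 1 -> [~ x, y]%g = 1%g}].
Proof. by exists rho; split; [exact: rho1 | exact: rhoM | exact: commg_ker_rho]. Qed.

End CentralCyclicExtension.

Section AbelianSubgroupsOfQuotient.
Local Open Scope group_scope.
Variables (gT : finGroupType) (H K : {group gT}).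
Hypothesis nsKH : K <| H.
Hypothesis commg_K : {in H &, forall x y, [~ x, y] \in K -> [~ x, y] = 1}.

Lemma normal_commg_trivial_cent : H \subset 'C(K).
Proof.
have /andP [sKH nKH] := nsKH.
apply/centsP => h Hh x Kx; apply/commgP/eqP/commg_K => //; first exact: subsetP Kx.
by apply: subsetP (mem_commg Hh Kx); rewrite commg_subr.
Qed.

Lemma abelian_of_quotient (L : {group gT}) : L \subset H -> abelian (L / K) -> abelian L.
Proof.
move=> sLH; have nKL : L \subset 'N(K) := subset_trans sLH (normal_norm nsKH).
rewrite /abelian quotient_cents2 // => sLLK.
apply/centsP => x Lx y Ly; apply/commgP/eqP/commg_K; try exact: subsetP sLH _ _.
exact: subsetP sLLK _ (mem_commg Lx Ly).
Qed.

Lemma min_index_abelian_quotient (A : {group gT}) : min_index_abelian A H ->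
  exists2 B : {group coset_of K}, min_index_abelian B (H / K) & #|H : A| = #|H / K : B|.
Proof.
case=> sAH abA minA; have /andP [sKH nKH] := nsKH.
have cKH := normal_commg_trivial_cent.
have sAKH : A <*> K \subset H by rewrite join_subG sAH.
have abAK : abelian (A <*> K).
  rewrite abelianY abA /abelian (subset_trans sKH cKH).
  by rewrite centsC (subset_trans sAH cKH).
have indexAK : #|H : A <*> K| = #|H : A|.
  apply/eqP; rewrite eqn_leq minA // andbT.
  by apply: dvdn_leq; [apply: indexg_gt0 | apply/indexgS/joing_subl].
have index_quo (L : {group gT}) :
    K \subset L -> L \subset H -> #|H / K : L / K| = #|H : L|.
  by move=> sKL sLH; rewrite index_quotient_eq // (subset_trans (subsetIr _ _) sKL).
exists ((A <*> K) / K)%G; last by rewrite index_quo ?joing_subr ?indexAK.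
split; [exact: quotientS | exact: quotient_abelian | move=> B sBH abB].
have [L defB sKL sLH] := inv_quotientS nsKH sBH; rewrite defB in abB *.
by rewrite !index_quo ?joing_subr // indexAK minA // abelian_of_quotient.
Qed.

End AbelianSubgroupsOfQuotient.

Lemma kquo_faithful_mxrep (R : comUnitRingType) (gT : finGroupType) (G : {group gT}) n
    (rG : mx_representation R G n) :
  faithful_mxrep (G / rker rG)%G (kquo_repr rG).
Proof.
split; first exact: repr_mxM; last exact: repr_mx_unit.
exact: mx_faithful_inj (kquo_mx_faithful rG).
Qed.

Lemma faithful_quotient_min_index_abelian (R : comUnitRingType) n
    (gT : finGroupType) (H A : {group gT}) (rho : gT -> 'M[R]_n.+1) :
    rho 1%g = 1 -> {in H &, {morph rho : x y / (x * y)%g >-> x * y}} ->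
    {in H &, forall x y, rho [~ x, y]%g = 1 -> [~ x, y]%g = 1%g} ->
    min_index_abelian A H ->
  exists (gT' : finGroupType) (H' A' : {group gT'}) (rho' : gT' -> 'M[R]_n.+1),
    [/\ faithful_mxrep H' rho', min_index_abelian A' H' & #|H : A|%g = #|H' : A'|%g].
Proof.
move=> rho1 rhoM rho_commg minA.
pose rG := MxRepresentation (conj rho1 rhoM : mx_repr H rho).
have commg_ker : {in H &, forall x y, [~ x, y]%g \in rker rG -> [~ x, y]%g = 1%g}.
  by move=> x y Hx Hy /rkerP [_ /rho_commg]; apply.
have [B minB indexB] := min_index_abelian_quotient (rker_normal rG) commg_ker minA.
by exists _, (H / rker rG)%G, B, (kquo_repr rG); split; first exact: kquo_faithful_mxrep.
Qed.

Theorem proposition3p4 (R : realType) (n : nat)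
    (M Gam : 'M[R[i]]_n -> Prop)
    (gT : finGroupType) (H : {group gT}) (f : 'M[R[i]]_n -> gT) :
  mx_subgroup M ->
  central_subgroup Gam M ->
  iso_to_Z Gam ->
  quotient_map M Gam H f ->
  forall A : {group gT}, min_index_abelian A H ->
  exists (gT' : finGroupType) (H' A' : {group gT'}) (rho : gT' -> 'M[R[i]]_n),
    [/\ faithful_mxrep H' rho, min_index_abelian A' H' &
        #|H : A|%g = #|H' : A'|%g ].
Proof.
case: n M Gam f => [|n] M Gam f [M1 M_unit MM MV] [_ GamM Gam_cent].
  move=> [phi [_ phi_inj _]].
  by have := phi_inj 0 1; rewrite [phi 0]flatmx0 [phi 1]flatmx0 => /(_ erefl).
move=> [phi [phiD phi_inj Gam_phi]] [fM f_onto f_ker] A minA.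
have Gam_phi1 z : Gam (phi z) by apply/Gam_phi; exists z.
have phiE := morph_int_exprz phiD (fun z => M_unit _ (GamM _ (Gam_phi1 z))).
have k_neq0 : #|H|%:R != 0 :> R[i] by rewrite pnatr_eq0 -lt0n cardG_gt0.
have [p s_root] := unitmx_kth_root_horner k_neq0 (M_unit _ (GamM _ (Gam_phi1 1))).
set s := horner_mx (phi 1) p in s_root.
have s_unit : s \is a GRing.unit.
  by rewrite -(unitrX_pos _ (cardG_gt0 H)) s_root; apply/M_unit/GamM.
have s_cent x : M x -> GRing.comm s x.
  by move=> Mx; apply: comm_horner_mx; apply: Gam_cent.
have gam_inj : injective (fun z : int => s ^+ #|H| ^ z).
  by move=> a b /=; rewrite s_root -!phiE => /phi_inj.
have f_ker_s x : M x -> f x = 1%g -> exists z, x = s ^+ #|H| ^ z.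
  by move=> Mx /(f_ker _ Mx) /Gam_phi [z ->]; exists z; rewrite s_root phiE.
have f_onto_H h : h \in H -> exists2 x, M x & f x = h by move/f_onto.
have [rho [rho1 rhoM rho_commg]] := exists_rep_ker_commg1
  M1 M_unit MM MV s_unit s_cent gam_inj fM f_onto_H f_ker_s.
exact: faithful_quotient_min_index_abelian rho1 rhoM rho_commg minA.
Qed.
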